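(* Let $G$ be a finite group and let $\Omega$ be a connected component of $\mathcal{P}^*(G)$ which is a clique (its vertices are pairwise adjacent). Then there exist a prime $p\in\pi(G)$ and a cyclic $p$-subgroup $H$ of $G$ such that $\mathcal{P}^*(H)=\Omega$.
   Context: For a finite group $G$, the power graph $\mathcal{P}(G)$ is the simple undirected graph with vertex set $G$, two distinct vertices $x,y$ being adjacent iff $\langle x\rangle\subseteq\langle y\rangle$ or $\langle y\rangle\subseteq\langle x\rangle$. $\mathcal{P}^*(G)$ denotes the graph obtained from $\mathcal{P}(G)$ by deleting the vertex $1$ (for a subgroup $H$, $\mathcal{P}^*(H)$ is the corresponding graph on $H\setminus\{1\}$, a subgraph of $\mathcal{P}^*(G)$). $\pi(G)$ is the set of prime divisors of $|G|$. *)

From mathcomp Require Import all_boot all_fingroup all_solvable.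
Set Implicit Arguments. Unset Strict Implicit. Unset Printing Implicit Defensive.
Local Open Scope group_scope.

Definition power_adj (gT : finGroupType) : rel gT :=
  fun x y => (x != y) && ((<[x]> \subset <[y]>) || (<[y]> \subset <[x]>)).

Definition pstar_rel (gT : finGroupType) (G : {set gT}) : rel gT :=
  fun x y => [&& x \in G^#, y \in G^# & power_adj x y].

Definition pstar_component (gT : finGroupType) (G Omega : {set gT}) : Prop :=
  exists2 x, x \in G^# & Omega = [set y in G^# | connect (pstar_rel G) x y].

Definition power_clique (gT : finGroupType) (Omega : {set gT}) : Prop :=
  {in Omega &, forall x y, x != y -> power_adj x y}.

(* Pick z of maximal order in the component Omega.  Every nontrivial element
   of <[z]> is adjacent to z, so <[z]>^# lies in Omega; conversely every y in
   Omega is adjacent to z, and maximality of #[z] forces <[y]> \subset <[z]>.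
   Hence Omega = <[z]>^#.  Finally, elements of prime orders p and q of a
   clique have comparable cyclic subgroups, so p = q and <[z]> is a p-group. *)
From mathcomp Require Import all_boot all_fingroup all_solvable.

Set Implicit Arguments.
Unset Strict Implicit.
Unset Printing Implicit Defensive.

Local Open Scope group_scope.

Section PowerGraph.

Variable gT : finGroupType.
Implicit Types (x y z : gT) (G H : {group gT}) (Omega : {set gT}).

Lemma power_adj_sym : symmetric (@power_adj gT).
Proof. by move=> x y; rewrite /power_adj eq_sym orbC. Qed.

Lemma power_adj_mem_cycle y z : y \in <[z]> -> y != z -> power_adj y z.
Proof. by move=> yz nyz; rewrite /power_adj nyz cycle_subG yz. Qed.

Lemma power_adj_order_dvd x y :
  power_adj x y -> (#[x] %| #[y]) || (#[y] %| #[x]).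
Proof. by case/andP=> _ /orP[] /cardSg ->; rewrite ?orbT. Qed.

Lemma power_adj_prime_order x y :
  prime #[x] -> prime #[y] -> power_adj x y -> #[x] = #[y].
Proof.
move=> px py /power_adj_order_dvd.
by rewrite !dvdn_prime2 // eq_sym orbb => /eqP.
Qed.

Lemma pgroup_power_clique H p :
  prime p -> p %| #|H| -> power_clique H^# -> p.-group H.
Proof.
move=> pr_p p_dvd cliqueH; apply/pnatP=> [|q pr_q q_dvd]; first exact: cardG_gt0.
have [a aH ord_a] := Cauchy pr_p p_dvd.
have [b bH ord_b] := Cauchy pr_q q_dvd.
have aH1 : a \in H^# by rewrite !inE aH andbT -order_gt1 ord_a prime_gt1.
have bH1 : b \in H^# by rewrite !inE bH andbT -order_gt1 ord_b prime_gt1.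
rewrite inE; apply/eqP; rewrite -ord_a -ord_b.
have [-> // | nba] := eqVneq b a.
apply: power_adj_prime_order; rewrite ?ord_a ?ord_b //.
exact: cliqueH bH1 aH1 nba.
Qed.

Lemma pstar_component_sub G Omega :
  pstar_component G Omega -> Omega \subset G^#.
Proof. by case=> x _ ->; apply/subsetP=> y; rewrite inE => /andP[]. Qed.

Lemma cycle_setD1_sub_component G Omega z :
  pstar_component G Omega -> z \in Omega -> <[z]>^# \subset Omega.
Proof.
case=> x _ ->; rewrite inE => /andP[zG1 xz].
have sZG : <[z]> \subset G by move: zG1; rewrite !inE cycle_subG => /andP[].
apply/subsetP=> y /setD1P[ny1 yz].
have yG1 : y \in G^# by rewrite !inE ny1 (subsetP sZG).
rewrite inE yG1 /=; have [-> // | nyz] := eqVneq y z.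
apply: connect_trans xz (connect1 _).
by rewrite /pstar_rel zG1 yG1 power_adj_sym power_adj_mem_cycle.
Qed.

Lemma power_clique_sub_cycle Omega z :
  power_clique Omega -> z \in Omega -> {in Omega, forall y, #[y] <= #[z]} ->
  Omega \subset <[z]>.
Proof.
move=> cliqueOm zOm zmax; apply/subsetP=> y yOm.
have [-> | nyz] := eqVneq y z; first exact: cycle_id.
case/andP: (cliqueOm y z yOm zOm nyz) => _ /orP[| zy]; first by rewrite cycle_subG.
suff -> : <[z]> = <[y]> by apply: cycle_id.
by apply/eqP; rewrite eqEcard zy zmax.
Qed.

End PowerGraph.

Theorem lemma3p3 (gT : finGroupType) (G : {group gT}) (Omega : {set gT}) :
  pstar_component G Omega -> power_clique Omega ->
  exists p : nat, exists2 H : {group gT},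
    [/\ prime p, p \in \pi(G), H \subset G, p.-group H & cyclic H] &
    H^# = Omega.
Proof.
move=> compOm cliqueOm.
have subOm := pstar_component_sub compOm.
have [x xG1 defOm] := compOm.
have xOm : x \in Omega by rewrite defOm inE xG1 connect0.
have [z zOm zmax] := arg_maxnP (fun y => #[y]) xOm.
have zG1 : z \in G^# := subsetP subOm z zOm.
have {zG1} [nz1 zG] : z != 1 /\ z \in G by apply/andP; rewrite -in_setD1.
have defH : <[z]>^# = Omega.
  apply/eqP; rewrite eqEsubset (cycle_setD1_sub_component compOm zOm) /=.
  rewrite subsetD1 power_clique_sub_cycle //.
  by apply/negP => /(subsetP subOm); rewrite !inE eqxx.
have pr_p : prime (pdiv #[z]).
  by rewrite pdiv_prime // order_gt1.
exists (pdiv #[z]), <[z]>%G => //; split=> //.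
- by rewrite mem_primes pr_p cardG_gt0 (dvdn_trans (pdiv_dvd _) (order_dvdG zG)).
- by rewrite cycle_subG.
- by apply: pgroup_power_clique pr_p (pdiv_dvd _) _; rewrite defH.
- exact: cycle_cyclic.
Qed.
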